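(* Let $T$ be a minimal homeomorphism of a compact metric space $X$, let $G$ be a locally compact second countable group, let $f:X\to G$ be continuous, and let $\{H_x\}_{x\in X}$ be a consistent selection of subgroups for $f$. Let $U\subseteq G$ be a relatively compact open set. Then the set $$M_U=\{x\in X: E_x\cap\big(\overline U H_x\setminus UH_x\big)=\varnothing\}$$ is open in $X$.
   Context: The cocycle generated by $f$ is $f(n,x)=f(T^{n-1}x)\cdots f(x)$ for $n\ge1$, $f(0,x)=e$, $f(n,x)=f(-n,T^nx)^{-1}$ for $n<0$; $T_f(x,g)=(Tx,f(x)g)$ on $X\times G$. The (local) essential range at $x\in X$ is $E_x=E_x(f)$, the set of all $g\in G$ such that for every open neighbourhood $\mathcal U$ of $x$ in $X$ and every open neighbourhood $V$ of $e$ in $G$ there is $n\in\mathbb Z$ and $y\in\mathcal U\cap T^{-n}\mathcal U$ with $f(n,y)\in Vg$. Let $\mathcal C(G)$ be the space of closed subgroups of $G$ with the Fell topology (the topology on closed subsets with basis sets $\{S: S\cap K=\varnothing, S\cap O_i\neq\varnothing, i=1,\dots,k\}$, $K$ compact, $O_i$ open). A consistent selection of subgroups is a continuous map $x\mapsto H_x$ from $X$ to $\mathcal C(G)$ such that $H_x\subseteq E_x$ for every $x$ and $H_{T^nx}=f(n,x)H_xf(n,x)^{-1}$ for all $x\in X$, $n\in\mathbb Z$. *)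

From HB Require Import structures.
From mathcomp Require Import all_boot all_order all_algebra.
From mathcomp Require Import all_classical all_reals topology.

Set Implicit Arguments.
Unset Strict Implicit.
Unset Printing Implicit Defensive.

Import Order.TTheory GRing.Theory Num.Theory.
Local Open Scope classical_set_scope.

HB.mixin Record Group_Topological_isTopGroup G of Group G & Topological G := {
  topgroup_mul_continuous : continuous (fun p : G * G => (p.1 * p.2)%g);
  topgroup_inv_continuous : continuous (fun x : G => (x^-1)%g)
}.

#[short(type="topGroupType")]
HB.structure Definition TopGroup :=
  {G of Group_Topological_isTopGroup G & Group G & Topological G}.

Section Defs.

Local Open Scope group_scope.

Definition setmulg (G : groupType) (A B : set G) : set G :=
  [set z | exists a b, A a /\ B b /\ z = a * b].

Definition closed_subgroup (G : topGroupType) (S : set G) : Prop :=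
  [/\ closed S, S 1, (forall a b, S a -> S b -> S (a * b))
    & (forall a, S a -> S a^-1)].

(* T^n for n in Z, given T and its inverse Ti *)
Definition iterz (X : Type) (T Ti : X -> X) (n : int) (x : X) : X :=
  match n with
  | Posz k => iter k T x
  | Negz k => iter k.+1 Ti x
  end.

Definition homeomorphism (X : topologicalType) (T Ti : X -> X) : Prop :=
  [/\ cancel T Ti, cancel Ti T, continuous T & continuous Ti].

Definition minimal_homeo (X : topologicalType) (T Ti : X -> X) : Prop :=
  homeomorphism T Ti /\
  forall A : set X, closed A -> T @` A = A -> A = set0 \/ A = setT.

(* the cocycle f(n,x) for n >= 0:  f(T^{n-1}x) ... f(x),  f(0,x) = e *)
Fixpoint cocycle_nat (X : Type) (G : groupType) (T : X -> X) (f : X -> G)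
  (n : nat) (x : X) : G :=
  match n with
  | 0 => 1
  | k.+1 => f (iter k T x) * cocycle_nat T f k x
  end.

(* f(n,x) for n in Z;  f(n,x) = f(-n, T^n x)^{-1} for n < 0 *)
Definition cocycle (X : Type) (G : groupType) (T Ti : X -> X) (f : X -> G)
  (n : int) (x : X) : G :=
  match n with
  | Posz k => cocycle_nat T f k x
  | Negz k => (cocycle_nat T f k.+1 (iterz T Ti (Negz k) x))^-1
  end.

Definition ess_range (X : topologicalType) (G : topGroupType) (T Ti : X -> X)
  (f : X -> G) (x : X) : set G :=
  [set g | forall (U : set X) (V : set G), open U -> U x -> open V -> V 1 ->
     exists (n : int) (y : X), U y /\ U (iterz T Ti n y) /\
       setmulg V [set g] (cocycle T Ti f n y)].

(* continuity of x |-> H x into the space C(G) of closed subgroups with the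
   Fell topology: the preimage of each basic open set
   {S : S :&: K = set0, S :&: O_i <> set0 (i < k)}, K compact, O_i open,
   is open in X. *)
Definition fell_continuous (X : topologicalType) (G : topGroupType)
  (H : X -> set G) : Prop :=
  forall (K : set G) (k : nat) (O : 'I_k -> set G),
    compact K -> (forall i, open (O i)) ->
    open [set x | H x `&` K = set0 /\ forall i, H x `&` O i !=set0].

Definition consistent_selection (X : topologicalType) (G : topGroupType)
  (T Ti : X -> X) (f : X -> G) (H : X -> set G) : Prop :=
  [/\ (forall x, closed_subgroup (H x)),
      fell_continuous H,
      (forall x, H x `<=` ess_range T Ti f x)
    & (forall x (n : int),
        H (iterz T Ti n x) =
        setmulg (setmulg [set cocycle T Ti f n x] (H x))
                [set (cocycle T Ti f n x)^-1])].

End Defs.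

(* The graph {(x, g) | g in E_x} is closed, and since x |-> H_x is lower
   hemicontinuous the set {(x, g) | g in U H_x} is open.  Hence, by the tube
   lemma over the compact set closure U, "every point of closure U lying in E_x
   lies in U H_x" is an open condition on x.  It is equivalent to x in M_U
   because E_x H_x = E_x: a return of the cocycle close to g, followed by a
   return close to h in H_x, is a return close to g h. *)
From HB Require Import structures.
From mathcomp Require Import all_boot all_order all_algebra.
From mathcomp Require Import all_classical all_reals topology zify.

Set Implicit Arguments.
Unset Strict Implicit.
Unset Printing Implicit Defensive.

Local Open Scope classical_set_scope.
Local Open Scope group_scope.

Lemma continuous_mulg (X : topologicalType) (G : topGroupType) (a b : X -> G) :
  continuous a -> continuous b -> continuous (fun y => a y * b y).
Proof.
move=> ca cb y.
apply: (@continuous_comp _ _ _ (fun y => (a y, b y)) (fun p : G * G => p.1 * p.2)).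
  by apply: cvg_pair; [exact: ca | exact: cb].
exact: topgroup_mul_continuous.
Qed.

Lemma continuous_invg (X : topologicalType) (G : topGroupType) (a : X -> G) :
  continuous a -> continuous (fun y => (a y)^-1).
Proof.
by move=> ca y; apply: continuous_comp; [exact: ca | exact: topgroup_inv_continuous].
Qed.

Lemma continuous_mulgr (G : topGroupType) (g : G) : continuous (fun v : G => v * g).
Proof. by apply: (@continuous_mulg _ _ id (fun=> g)) => y; [|exact: cvg_cst]. Qed.

Lemma nbhs_pairP (X Y : topologicalType) (x : X) (y : Y) (P : set (X * Y)) :
  nbhs (x, y) P -> exists A B, [/\ open A, A x, open B, B y &
     forall a b, A a -> B b -> P (a, b)].
Proof.
move=> [[A0 B0] /= []]; rewrite !nbhsE => -[A [oA Ax] AA0] [B [oB By] BB0] sub.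
by exists A, B; split => // a b Aa Bb; apply: sub; split; [exact: AA0|exact: BB0].
Qed.

Lemma compact_tube (X Y : topologicalType) (K : set Y) (O : set (X * Y)) x :
  compact K -> open O -> (forall y, K y -> O (x, y)) ->
  \forall x' \near x, forall y, K y -> O (x', y).
Proof.
move=> /compact_near_coveringP cK oO KO.
apply: (cK _ _ (fun x' y => O (x', y))) => y Ky.
have /nbhs_pairP[A [B [oA Ax oB By AB]]] : nbhs (x, y) O.
  by apply: open_nbhs_nbhs; split=> //; exact: KO.
by exists (B, A); [split; exact: open_nbhs_nbhs | case=> b a [/= Bb Aa]; apply: AB].
Qed.

Lemma int_ind_pm1 (P : int -> Prop) : P 0%R ->
  (forall n, P n -> P (n + 1)%R) -> (forall n, P n -> P (n - 1)%R) ->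
  forall n, P n.
Proof.
move=> P0 Pp Pm; case=> k.
  elim: k => // k IH; have := Pp _ IH.
  by have -> : (Posz k + 1)%R = Posz k.+1 by lia.
elim: k => [|k IH]; first exact: (Pm _ P0).
by have := Pm _ IH; have -> : (Negz k - 1)%R = Negz k.+1 by lia.
Qed.

Section Cocycle.

Variables (X : Type) (G : groupType) (T Ti : X -> X) (f : X -> G).
Hypotheses (TK : cancel T Ti) (TiK : cancel Ti T).

Local Notation Tz := (iterz T Ti).
Local Notation fz := (cocycle T Ti f).

Lemma iterz_succ n x : Tz (n + 1)%R x = T (Tz n x).
Proof.
case: n => [k|[|k]].
- by have -> : (Posz k + 1)%R = Posz k.+1 by lia.
- by have -> : (Negz 0 + 1)%R = 0%R by lia; rewrite /= TiK.
- have -> : (Negz k.+1 + 1)%R = Negz k by lia.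
  by rewrite /= TiK.
Qed.

Lemma iterz_pred n x : Tz (n - 1)%R x = Ti (Tz n x).
Proof. by rewrite -[in Tz n x](GRing.subrK 1%R n) iterz_succ TK. Qed.

Lemma iterzD n m x : Tz (n + m)%R x = Tz n (Tz m x).
Proof.
elim/int_ind_pm1: n => [|n IH|n IH]; first by rewrite GRing.add0r.
- by rewrite GRing.addrAC !iterz_succ IH.
- by rewrite GRing.addrAC !iterz_pred IH.
Qed.

Lemma cocycle_natSr k y : cocycle_nat T f k.+1 y = cocycle_nat T f k (T y) * f y.
Proof.
elim: k y => [|k IH] y; first by rewrite /= mulg1 mul1g.
by rewrite -[LHS]/(f (iter k.+1 T y) * cocycle_nat T f k.+1 y) IH mulgA iterSr.
Qed.

Lemma cocycle_succ n x : fz (n + 1)%R x = f (Tz n x) * fz n x.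
Proof.
case: n => [k|[|k]].
- by have -> : (Posz k + 1)%R = Posz k.+1 by lia.
- have -> : (Negz 0 + 1)%R = 0%R by lia.
  by rewrite /= mulg1 mulgV.
have -> : (Negz k.+1 + 1)%R = Negz k by lia.
change ((cocycle_nat T f k.+1 (iter k.+1 Ti x))^-1 =
  f (iter k.+2 Ti x) * (cocycle_nat T f k.+2 (iter k.+2 Ti x))^-1).
rewrite [cocycle_nat T f k.+2 _]cocycle_natSr.
rewrite -[iter k.+2 Ti x]/(Ti (iter k.+1 Ti x)) TiK.
by rewrite [in RHS]invgM [in RHS]mulgA mulgV mul1g.
Qed.

Lemma cocycle_pred n x : fz (n - 1)%R x = (f (Tz (n - 1)%R x))^-1 * fz n x.
Proof. by rewrite -[in fz n x](GRing.subrK 1%R n) cocycle_succ mulKg. Qed.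

Lemma cocycleD n m x : fz (n + m)%R x = fz n (Tz m x) * fz m x.
Proof.
elim/int_ind_pm1: n => [|n IH|n IH]; first by rewrite GRing.add0r mul1g.
- by rewrite GRing.addrAC !cocycle_succ IH mulgA iterzD.
- by rewrite GRing.addrAC !cocycle_pred IH mulgA -iterzD GRing.addrAC.
Qed.

End Cocycle.

Lemma iterz_continuous (X : topologicalType) (T Ti : X -> X) n :
  continuous T -> continuous Ti -> continuous (iterz T Ti n).
Proof.
have iterC (S : X -> X) k : continuous S -> continuous (iter k S).
  move=> cS; elim: k => [|k IH] y //.
  exact: (continuous_comp (IH y) (cS _)).
by move=> cT cTi; case: n => k; exact: iterC.
Qed.

Lemma cocycle_continuous (X : topologicalType) (G : topGroupType)
    (T Ti : X -> X) (f : X -> G) n :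
  continuous T -> continuous Ti -> continuous f -> continuous (cocycle T Ti f n).
Proof.
move=> cT cTi cf.
have cN k : continuous (cocycle_nat T f k).
  elim: k => [|k IH] /=; first by move=> y; exact: cvg_cst.
  apply: continuous_mulg => // y; apply: continuous_comp (cf _).
  exact: (@iterz_continuous _ T Ti (Posz k) cT cTi y).
case: n => k; first exact: cN.
apply: (continuous_invg (a := fun y => cocycle_nat T f k.+1 (iterz T Ti (Negz k) y))).
move=> y; apply: continuous_comp (cN _ _).
exact: (@iterz_continuous _ T Ti (Negz k) cT cTi y).
Qed.

Definition lower_hemicontinuous (X Y : topologicalType) (H : X -> set Y) :=
  forall B, open B -> open [set x | H x `&` B !=set0].

Lemma fell_continuous_lower (X : topologicalType) (G : topGroupType)
    (H : X -> set G) :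
  fell_continuous H -> lower_hemicontinuous H.
Proof.
move=> FH B oB; have := FH set0 1%N (fun=> B) compact0 (fun=> oB).
congr open; apply/seteqP; split => [x [_ /(_ ord0)] //|x HB].
by split=> [|_]; [exact: setI0 | exact: HB].
Qed.

Lemma open_setmulg_lower (X : topologicalType) (G : topGroupType)
    (H : X -> set G) (U : set G) :
  lower_hemicontinuous H -> open U ->
  open [set p : X * G | setmulg U (H p.1) p.2].
Proof.
move=> lH oU; rewrite openE => -[x g] /= [w [h [Uw [Hh ->]]]].
have /nbhs_pairP[A [B [oA Ag oB Bh AB]]] :
    nbhs (w * h, h) ((fun p : G * G => p.1 * p.2^-1) @^-1` U).
  have cont : continuous (fun p : G * G => p.1 * p.2^-1).
    apply: continuous_mulg => [p|]; first exact: cvg_fst.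
    by apply: continuous_invg => p; exact: cvg_snd.
  by apply: cont; apply: open_nbhs_nbhs; split; rewrite /= ?mulgK.
have oL := lH _ oB.
exists ([set x' | H x' `&` B !=set0], A).
  by split; apply: open_nbhs_nbhs; split=> //; exists h.
case=> x' a [/= [h' [Hh' Bh']] Aa]; exists (a * h'^-1), h'.
by split; [exact: AB | rewrite mulgVK].
Qed.

Section EssentialRange.

Variables (X : topologicalType) (G : topGroupType) (T Ti : X -> X) (f : X -> G).

Local Notation E := (ess_range T Ti f).

Lemma ess_rangeP x g : E x g <->
  forall (U : set X) (A : set G), open U -> U x -> open A -> A g ->
    exists n y, U y /\ U (iterz T Ti n y) /\ A (cocycle T Ti f n y).
Proof.
split=> [Eg U A oU Ux oA Ag | E' U V oU Ux oV V1].
- have oV : open ((fun v => v * g) @^-1` A).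
    by apply: (proj1 (continuousP _)) oA; exact: continuous_mulgr.
  have V1 : ((fun v => v * g) @^-1` A) 1 by rewrite /= mul1g.
  have [n [y [Uy [Uny [a [b [Va [-> ce]]]]]]]] := Eg U _ oU Ux oV V1.
  by exists n, y; rewrite ce.
- have oA : open ((fun c => c * g^-1) @^-1` V).
    by apply: (proj1 (continuousP _)) oV; exact: continuous_mulgr.
  have Ag : ((fun c => c * g^-1) @^-1` V) g by rewrite /= mulgV.
  have [n [y [Uy [Uny Ac]]]] := E' U _ oU Ux oA Ag.
  exists n, y; do 2!split=> //.
  by exists (cocycle T Ti f n y * g^-1), g; rewrite mulgVK.
Qed.

Lemma open_not_ess_range : open [set p : X * G | ~ E p.1 p.2].
Proof.
rewrite openE => -[x u] /= /ess_rangeP nEu.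
have [U0 [A [oU0 U0x oA Au noret]]] : exists U0 A, [/\ open U0, U0 x, open A, A u &
    forall n y, U0 y -> U0 (iterz T Ti n y) -> ~ A (cocycle T Ti f n y)].
  apply: contrapT => nex; apply: nEu => U0 A oU0 U0x oA Au.
  apply: contrapT => nret; apply: nex; exists U0, A; split => // n y U0y U0ny Ac.
  by apply: nret; exists n, y.
exists (U0, A); first by split; exact: open_nbhs_nbhs.
case=> x' a [/= U0x' Aa] /ess_rangeP Ea.
by have [n [y [U0y [U0ny]]]] := Ea U0 A oU0 U0x' oA Aa; exact: noret.
Qed.

Hypotheses (TK : cancel T Ti) (TiK : cancel Ti T).
Hypotheses (cT : continuous T) (cTi : continuous Ti) (cf : continuous f).

Lemma ess_range_mulr (H : X -> set G) :
  lower_hemicontinuous H -> (forall x, H x `<=` E x) ->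
  forall x g h, E x g -> H x h -> E x (g * h).
Proof.
move=> lH HE x g h /ess_rangeP Eg Hh; apply/ess_rangeP => U A oU Ux oA Agh.
have /nbhs_pairP[A1 [B1 [oA1 A1g oB1 B1h AB]]] :
    nbhs (g, h) ((fun p : G * G => p.1 * p.2) @^-1` A).
  by apply: topgroup_mul_continuous; apply: open_nbhs_nbhs.
pose L := U `&` [set x' | H x' `&` B1 !=set0].
have oL : open L by apply: openI => //; exact: lH.
have [n [y [Ly [Lny A1c]]]] :=
  Eg L A1 oL (conj Ux (ex_intro _ h (conj Hh B1h))) oA1 A1g.
have [_ [h' [Hh' B1h']]] := Ly.
(* y is a return point near g; now return from y near h, staying close
   enough to y that the first return remains near g. *)
pose W := L `&` (iterz T Ti n @^-1` L) `&` (cocycle T Ti f n @^-1` A1).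
have oW : open W.
  apply: openI; first apply: openI => //.
    exact: (proj1 (continuousP _) (iterz_continuous (n:=n) cT cTi) _ oL).
  exact: (proj1 (continuousP _) (cocycle_continuous (n:=n) cT cTi cf) _ oA1).
have Wy : W y by split; first split.
have [m [z [[[[Uz _] _] _] [[[_ [Unmz _]] A1nmz] B1c]]]] :=
  proj1 (ess_rangeP y h') (HE y h' Hh') W B1 oW Wy oB1 B1h'.
exists (n + m)%R, z; do 2!split => //; first by rewrite iterzD.
by rewrite cocycleD //; exact: AB.
Qed.

End EssentialRange.

Theorem lemma3p1 (R : realType) (X : pseudoMetricType R) (G : topGroupType)
  (T Ti : X -> X) (f : X -> G) (H : X -> set G) (U : set G) :
  hausdorff_space X -> compact [set: X] ->
  minimal_homeo T Ti ->
  hausdorff_space G -> locally_compact [set: G] -> @second_countable G ->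
  continuous f ->
  consistent_selection T Ti f H ->
  open U -> compact (closure U) ->
  open [set x | ess_range T Ti f x `&`
                  (setmulg (closure U) (H x) `\` setmulg U (H x)) = set0].
Proof.
move=> _ _ [[TK TiK cT cTi] _] _ _ _ cf [Hsub /fell_continuous_lower lH HE _] oU cU.
pose O := [set p : X * G | ~ ess_range T Ti f p.1 p.2 \/ setmulg U (H p.1) p.2].
have oO : open O.
  by apply: openU; [exact: open_not_ess_range | exact: open_setmulg_lower].
rewrite openE => x Mx.
have tube : \forall x' \near x, forall u, closure U u -> O (x', u).
  apply: compact_tube cU oO _ => u Uu.
  have [Eu|] := pselect (ess_range T Ti f x u); [right|by left].
  apply: contrapT => nUH; have [_ H1 _ _] := Hsub x.
  suff : (ess_range T Ti f x `&` (setmulg (closure U) (H x) `\` setmulg U (H x))) u.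
    by rewrite Mx.
  split=> //; split=> //; exists u, 1.
  by split=> //; split=> //; rewrite mulg1.
apply: filterS tube => x' Ox'.
apply/seteqP; split => // g [Eg [[a [h [Ua [Hh gE]]]] nUH]]; subst g.
have [_ _ Hmul Hinv] := Hsub x'.
have Ea : ess_range T Ti f x' a.
  rewrite -(mulgK h a).
  exact: (ess_range_mulr TK TiK cT cTi cf lH HE Eg (Hinv h Hh)).
case: (Ox' a Ua) => /= [/(_ Ea) [] | [w [h2 [Uw [Hh2 aE]]]]].
apply: nUH; exists w, (h2 * h); split=> //; split; first exact: Hmul.
by rewrite aE mulgA.
Qed.
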